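(* Let $(\mathbf{i},\mathbf{a})\in I^m\times\mathbb{C}^m$, let $\pi\in S_m$ be $(\mathbf{i},\mathbf{a})$-admissible, and let $1\le k<m$ with $\ell(\pi s_k)<\ell(\pi)$, where $\ell$ is the Coxeter length and $s_k=(k,k+1)$. Then $s_k$ is $(s_k(\mathbf{i}),s_k(\mathbf{a}))$-admissible.
   Context: $I$ is the vertex set of a finite simple bipartite graph $I=I_{\bar0}\sqcup I_{\bar1}$, with every edge oriented from its even to its odd endpoint; write $i\leftarrow j$ if there is an oriented edge from $j$ to $i$. $S_m$ acts on $m$-tuples by $\pi(\mathbf{a})=(a_{\pi^{-1}(1)},\dots,a_{\pi^{-1}(m)})$. For $(\mathbf{i},\mathbf{a})\in I^m\times\mathbb{C}^m$, distinct indices $k,l$ are not $(\mathbf{i},\mathbf{a})$-switchable if $i_k\leftarrow i_l$ and $a_k=a_l+1$ (checked for the pair in either order), and switchable otherwise. $\pi\in S_m$ is $(\mathbf{i},\mathbf{a})$-admissible if for every non-switchable pair $k,l$, $\pi(k),\pi(l)$ are in the same relative order as $k,l$. *)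

From HB Require Import structures.
From mathcomp Require Import all_boot all_order all_algebra all_fingroup.
Set Implicit Arguments. Unset Strict Implicit. Unset Printing Implicit Defensive.
Import GRing.Theory Num.Theory.
Local Open Scope ring_scope.

(* Indices 1..m of the paper are represented 0-based by 'I_m. *)

(* Oriented bipartite graph on I: par x = false means x \in I_0bar (even),
   true means odd.  Edges are oriented from even to odd endpoint.
   [arrow e par i j] is "i <- j": there is an oriented edge from j to i. *)
Definition arrow (I : finType) (e : rel I) (par : I -> bool) (i j : I) : bool :=
  [&& e i j, ~~ par j & par i].

Definition pact (T : Type) (m : nat) (pi : 'S_m) (a : 'I_m -> T) : 'I_m -> T :=
  fun k => a ((pi^-1)%g k).

Definition not_switchable (I : finType) (e : rel I) (par : I -> bool)
  (F : nzRingType) (m : nat) (i : 'I_m -> I) (a : 'I_m -> F) (k l : 'I_m) : bool :=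
  (arrow e par (i k) (i l) && (a k == a l + 1))
  || (arrow e par (i l) (i k) && (a l == a k + 1)).

Definition admissible (I : finType) (e : rel I) (par : I -> bool)
  (F : nzRingType) (m : nat) (i : 'I_m -> I) (a : 'I_m -> F) (pi : 'S_m) : Prop :=
  forall k l : 'I_m, k != l -> not_switchable e par i a k l ->
    ((k < l)%N = (pi k < pi l)%N).

Definition coxlen (m : nat) (pi : 'S_m) : nat :=
  #|[set p : 'I_m * 'I_m | (p.1 < p.2)%N && (pi p.2 < pi p.1)%N]|.

(* Simple transposition s_k = (k, k+1) in 1-based indexing, i.e. it swaps the
   0-based positions k-1 and k; identity when out of range. *)
Definition sk (m k : nat) : 'S_m :=
  match insub k.-1, insub k with
  | Some x, Some y => tperm x y
  | _, _ => 1%g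
  end.

(* Composition as functions: (permcomp pi s) x = pi (s x).  In mathcomp,
   (s * pi)%g x = pi (s x). *)
Definition permcomp (m : nat) (pi s : 'S_m) : 'S_m := (s * pi)%g.

From HB Require Import structures.
From mathcomp Require Import all_boot all_order all_algebra all_fingroup.
From mathcomp Require Import zify.

(* An adjacent transposition s = (x, x+1) changes the relative order of a pair
   only if the pair is {x, x+1}.  Hence if pi s is shorter than pi, then
   pi x > pi (x+1), and admissibility of pi forces x and x+1 to be switchable.
   In s(i, a) the pair {x, x+1} is the image of that switchable pair, and s
   preserves the order of every other pair, so s is s(i, a)-admissible. *)

Section AdjacentTransposition.

Context {m : nat} {x y : 'I_m}.
Hypothesis yE : y = x.+1 :> nat.

Lemma sk_adjacent : sk m y = tperm x y.
Proof.
rewrite /sk yE /=.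
rewrite (insubT (fun n => n < m) (ltn_ord x)) -yE.
rewrite (insubT (fun n => n < m) (ltn_ord y)).
by congr tperm; apply: val_inj.
Qed.

Lemma ltn_tperm_adjacent (p q : 'I_m) :
  (p, q) \notin [:: (x, y); (y, x)] ->
  (tperm x y p < tperm x y q) = (p < q).
Proof.
rewrite !inE !xpair_eqE -!(inj_eq val_inj) /=.
have ne_val (u v : 'I_m) : u <> v -> u <> v :> nat.
  by apply: contra_not; apply: val_inj.
by case: tpermP => [->|->|/ne_val ? /ne_val ?];
  case: tpermP => [->|->|/ne_val ? /ne_val ?]; rewrite ?eqxx /=; lia.
Qed.

Lemma coxlen_tperm_ascent { pi : 'S_m } :
  pi x < pi y -> coxlen pi <= coxlen (permcomp pi (tperm x y)).
Proof.
move=> asc; rewrite /coxlen /permcomp.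
pose swap (p : 'I_m * 'I_m) := (tperm x y p.1, tperm x y p.2).
have swap_inj : injective swap.
  by move=> [p1 p2] [q1 q2] [/perm_inj -> /perm_inj ->].
rewrite -(card_imset _ swap_inj); apply/subset_leq_card/subsetP.
move=> _ /imsetP[[p q] + ->]; rewrite !inE /= => /andP[lt_pq inv_pq].
rewrite !permM !tpermK inv_pq andbT ltn_tperm_adjacent //.
rewrite !inE !xpair_eqE; apply/norP; split; apply/andP => -[/eqP pE /eqP qE].
  by move: inv_pq; rewrite pE qE ltnNge ltnW.
by move: lt_pq; rewrite pE qE yE ltnNge leqnSn.
Qed.

Lemma descent_of_coxlen_tperm { pi : 'S_m } :
  coxlen (permcomp pi (tperm x y)) < coxlen pi -> pi y < pi x.
Proof.
move=> shorter; rewrite ltn_neqAle andbC leqNgt.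
case: ltnP => [asc|_] /=.
  by have := coxlen_tperm_ascent asc; rewrite leqNgt shorter.
by apply/negP => /eqP/val_inj/perm_inj yx; move: yE; rewrite yx => /n_Sn.
Qed.

End AdjacentTransposition.

Section Switchability.

Context {I : finType} {e : rel I} {par : I -> bool} {F : nzRingType} {m : nat}.
Context {i : 'I_m -> I} {a : 'I_m -> F}.

Lemma not_switchableC (k l : 'I_m) :
  not_switchable e par i a k l = not_switchable e par i a l k.
Proof. by rewrite /not_switchable orbC. Qed.

Lemma not_switchable_pact (s : 'S_m) (k l : 'I_m) :
  not_switchable e par (pact s i) (pact s a) k l
  = not_switchable e par i a ((s^-1)%g k) ((s^-1)%g l).
Proof. by []. Qed.

Lemma switchable_of_inversion { pi : 'S_m } {k l : 'I_m} :
  admissible e par i a pi -> k < l -> pi l < pi k ->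
  ~~ not_switchable e par i a k l.
Proof.
move=> adm lt_kl inv_kl; apply/negP => ns.
have neq_kl : k != l by apply: contraTneq lt_kl => ->; rewrite ltnn.
by move: (adm k l neq_kl ns); rewrite lt_kl ltnNge ltnW.
Qed.

Lemma admissible_tperm_adjacent {x y : 'I_m} : y = x.+1 :> nat ->
  ~~ not_switchable e par i a x y ->
  admissible e par (pact (tperm x y) i) (pact (tperm x y) a) (tperm x y).
Proof.
move=> yE sw_xy p q _ ns; rewrite (ltn_tperm_adjacent yE) //.
have sw_yx : ~~ not_switchable e par i a y x by rewrite not_switchableC.
rewrite !inE !xpair_eqE; apply/norP; split; apply/andP => -[/eqP pE /eqP qE];
  by move: ns; rewrite pE qE not_switchable_pact tpermV tpermL tpermR
       ?(negbTE sw_xy) ?(negbTE sw_yx).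
Qed.

End Switchability.

Theorem lemma5p6 (I : finType) (e : rel I) (par : I -> bool)
  (e_sym : symmetric e) (e_irr : irreflexive e)
  (e_bip : forall x y : I, e x y -> par x != par y)
  (C : numClosedFieldType) (m : nat) (i : 'I_m -> I) (a : 'I_m -> C)
  (pi : 'S_m) (k : nat) :
  admissible e par i a pi ->
  (1 <= k)%N -> (k < m)%N ->
  (coxlen (permcomp pi (sk m k)) < coxlen pi)%N ->
  admissible e par (pact (sk m k) i) (pact (sk m k) a) (sk m k).
Proof.
move=> adm k_gt0 k_lt_m shorter.
pose x := Ordinal (leq_ltn_trans (leq_pred k) k_lt_m); pose y := Ordinal k_lt_m.
have yE : y = x.+1 :> nat by rewrite /= prednK.
have skE : sk m k = tperm x y := sk_adjacent yE.
rewrite skE in shorter *; apply: (admissible_tperm_adjacent yE).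
have descent := descent_of_coxlen_tperm yE shorter.
by apply: (switchable_of_inversion adm _ descent); rewrite yE.
Qed.
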